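(* Let $a<b$, $c<d$ be real numbers and $C\in\mathbb{R}\setminus\{0\}$. Let $(p_n)_{n\in\mathbb{N}_0}$ and $(q_n)_{n\in\mathbb{N}_0}$ be real sequences with $p_0=q_0$ such that the power series $\sigma(s)=\sum_{n\ge 0}p_n(s-a)^n$ and $\tau(t)=\sum_{n\ge0}q_n(t-c)^n$ converge uniformly on $[a,b]$ and $[c,d]$ respectively. Let $k:[a,b]\times[c,d]\to\mathbb{R}$ be the solution of the Goursat problem $$\frac{\partial^2 k}{\partial s\,\partial t}=Ck \text{ on } [a,b]\times[c,d],\qquad k(s,c)=\sigma(s),\quad k(a,t)=\tau(t).$$ Then, writing $\Delta_{a,b}=b-a$ and $\Delta_{c,d}=d-c$, one has $k(s,d)=\sum_{n\ge0}\tilde p_n(s-a)^n$ for $s\in[a,b]$ and $k(b,t)=\sum_{n\ge0}\tilde q_n(t-c)^n$ for $t\in[c,d]$, where for all $n\in\mathbb{N}_0$ $$\tilde p_n=\sum_{k=0}^{n}p_k\frac{(C\Delta_{c,d})^{n-k}\,k!}{(n-k)!\,n!}+\sum_{k=1}^{\infty}q_k\frac{C^n\Delta_{c,d}^{\,n+k}\,k!}{(n+k)!\,n!},$$ $$\tilde q_n=\sum_{k=0}^{n}q_k\frac{(C\Delta_{a,b})^{n-k}\,k!}{(n-k)!\,n!}+\sum_{k=1}^{\infty}p_k\frac{C^n\Delta_{a,b}^{\,n+k}\,k!}{(n+k)!\,n!}.$$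
   Context: By the solution of the Goursat problem is meant the continuous function $k$ on $[a,b]\times[c,d]$ satisfying $k(s,t)=\sigma(s)+\tau(t)-\sigma(a)+C\int_a^s\int_c^t k(r,w)\,dw\,dr$ for all $(s,t)$ in the rectangle (equivalently, the classical solution given by the Riemann-function representation with $I_0$, the zero-order modified Bessel function of the first kind). *)

From Stdlib Require Import Reals Lra Lia.
From Coquelicot Require Import Coquelicot.
Open Scope R_scope.

Definition unif_conv_pseries (p : nat -> R) (x0 lo hi : R) (f : R -> R) : Prop :=
  forall eps : R, 0 < eps ->
    exists N : nat, forall n : nat, (N <= n)%nat ->
      forall x : R, lo <= x <= hi ->
        Rabs (sum_f_R0 (fun j => p j * (x - x0) ^ j) n - f x) < eps.

Definition cont_on_rect (k : R -> R -> R) (a b c d : R) : Prop :=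
  forall s t : R, a <= s <= b -> c <= t <= d ->
    forall eps : R, 0 < eps -> exists delta : R, 0 < delta /\
      forall s' t' : R, a <= s' <= b -> c <= t' <= d ->
        Rabs (s' - s) < delta -> Rabs (t' - t) < delta ->
        Rabs (k s' t' - k s t) < eps.

(* k is the solution of the Goursat problem  k_st = C k,
   k(s,c) = sigma s, k(a,t) = tau t, in integral form. *)
Definition goursat_solution (C a b c d : R) (sigma tau : R -> R)
    (k : R -> R -> R) : Prop :=
  cont_on_rect k a b c d /\
  forall s t : R, a <= s <= b -> c <= t <= d ->
    k s t = sigma s + tau t - sigma a
            + C * RInt (fun r => RInt (fun w => k r w) c t) a s.

Definition coef_fin (p : nat -> R) (C D : R) (n : nat) : R :=
  sum_f_R0 (fun j => p j * (C * D) ^ (n - j) * INR (Factorial.fact j)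
                     / (INR (Factorial.fact (n - j)) * INR (Factorial.fact n))) n.

(* j-th term (j = 0,1,...) of the infinite part, corresponding to index k = j+1:
   q_k C^n D^(n+k) k! / ((n+k)! n!) *)
Definition coef_inf_term (q : nat -> R) (C D : R) (n j : nat) : R :=
  q (S j) * C ^ n * D ^ (n + S j) * INR (Factorial.fact (S j))
    / (INR (Factorial.fact (n + S j)) * INR (Factorial.fact n)).

From Stdlib Require Import Reals Lra Lia Factorial.
From Coquelicot Require Import Coquelicot.
Open Scope R_scope.

(* Extend k to the whole plane by clamping and write the Goursat problem as
   k = u_0 + C V k, with u_0(s,t) = sigma(s) + tau(t) - sigma(a) and
   V h(s,t) = int_a^s int_c^t h.  The Picard iterates u_j = (C V)^j u_0 are explicit,
     u_j(s,t) = C^j [ (t-c)^j/j! I^j sigma(s) + (s-a)^j/j! I^j tau(t)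
                      - sigma(a) (s-a)^j (t-c)^j / (j!)^2 ],
   where I is integration from the base point, and the remainder after N terms is at
   most B (|C| (b-a) (d-c))^N / (N!)^2, so k = sum_j u_j.  On the edge t = d, the
   uniformly convergent series of sigma may be integrated termwise,
   I^j sigma(s) = sum_m p_m m!/(m+j)! (s-a)^(m+j); collecting the powers of s - a in
   this triangular double series (by a Tannery-type argument, since the series of
   sigma need not converge absolutely) gives the finite part of the coefficients,
   while the infinite part is C^n/n! times the tail of the expansion of I^n tau(d).
   The edge s = b is symmetric. *)

Definition cont_everywhere (f : R -> R) : Prop := forall x, continuous f x.

Lemma cont_everywhere_at (f : R -> R) (x : R) :
  cont_everywhere f -> continuous f x.
Proof. intros Hf; apply Hf. Qed.

Lemma continuous_eps_delta (f : R -> R) (x : R) :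
  (forall eps, 0 < eps -> exists dl, 0 < dl /\
     forall y, Rabs (y - x) < dl -> Rabs (f y - f x) < eps) ->
  continuous f x.
Proof.
  intros H; apply continuity_pt_filterlim; intros eps Heps.
  destruct (H eps Heps) as [dl [Hdl Hy]].
  exists dl; split; [exact Hdl |]; intros y [_ Hy']; apply Hy, Hy'.
Qed.

(* Coquelicot states these for the generic [plus], [mult], [scal]; the versions on
   [Rplus], [Rmult] below are the ones [rewrite] and [auto] can match. *)
Lemma continuous_Rplus (f g : R -> R) (x : R) :
  continuous f x -> continuous g x -> continuous (fun y => f y + g y) x.
Proof. exact (continuous_plus f g x). Qed.

Lemma continuous_Rminus (f g : R -> R) (x : R) :
  continuous f x -> continuous g x -> continuous (fun y => f y - g y) x.
Proof. exact (continuous_minus f g x). Qed.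

Lemma continuous_Rmult (f g : R -> R) (x : R) :
  continuous f x -> continuous g x -> continuous (fun y => f y * g y) x.
Proof. exact (continuous_mult f g x). Qed.

Lemma continuous_Rdiv_const (f : R -> R) (v x : R) :
  continuous f x -> continuous (fun y => f y / v) x.
Proof. intros Hf; apply (continuous_Rmult f (fun _ => / v)); [exact Hf | apply continuous_const]. Qed.

Lemma continuous_Rconst (v x : R) : continuous (fun _ : R => v) x.
Proof. exact (continuous_const v x). Qed.

Lemma continuous_shifted_pow (lo : R) (n : nat) (x : R) :
  continuous (fun r => (r - lo) ^ n) x.
Proof.
  apply (ex_derive_continuous (K := R_AbsRing) (V := R_NormedModule)).
  auto_derive; trivial.
Qed.

Create HintDb cont.
#[local] Hint Unfold cont_everywhere : cont.
#[local] Hint Resolve cont_everywhere_at continuous_Rplus continuous_Rminus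
  continuous_Rmult continuous_Rdiv_const continuous_Rconst
  continuous_shifted_pow : cont.

Lemma ex_RInt_cont (f : R -> R) (lo hi : R) :
  cont_everywhere f -> ex_RInt f lo hi.
Proof.
  intros Hf; apply (ex_RInt_continuous (V := R_CompleteNormedModule)).
  intros x _; apply Hf.
Qed.

#[local] Hint Resolve ex_RInt_cont : cont.

Lemma RInt_Rplus (f g : R -> R) (lo hi : R) :
  ex_RInt f lo hi -> ex_RInt g lo hi ->
  RInt (fun x => f x + g x) lo hi = RInt f lo hi + RInt g lo hi.
Proof. exact (RInt_plus f g lo hi). Qed.

Lemma RInt_Rminus (f g : R -> R) (lo hi : R) :
  ex_RInt f lo hi -> ex_RInt g lo hi ->
  RInt (fun x => f x - g x) lo hi = RInt f lo hi - RInt g lo hi.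
Proof. exact (RInt_minus f g lo hi). Qed.

Lemma RInt_Rscal (f : R -> R) (lo hi l : R) :
  ex_RInt f lo hi -> RInt (fun x => l * f x) lo hi = l * RInt f lo hi.
Proof. exact (RInt_scal f lo hi l). Qed.

Lemma RInt_shifted_pow (n : nat) (lo s : R) :
  RInt (fun r => (r - lo) ^ n) lo s = (s - lo) ^ S n / INR (S n).
Proof.
  apply is_RInt_unique.
  replace ((s - lo) ^ S n / INR (S n))
    with (minus ((s - lo) ^ S n / INR (S n)) ((lo - lo) ^ S n / INR (S n)))
    by (unfold minus, plus, opp; simpl; rewrite Rminus_diag; lra).
  apply (is_RInt_derive (V := R_CompleteNormedModule)
           (fun r => (r - lo) ^ S n / INR (S n))).
  - intros x _. auto_derive; trivial.
    change (match n with 0%nat => 1 | S _ => INR n + 1 end) with (INR (S n)).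
    replace (x + - lo) with (x - lo) by ring.
    field. apply not_0_INR; lia.
  - intros x _. auto with cont.
Qed.

Lemma RInt_shifted_pow_fact (lo s : R) (j : nat) :
  RInt (fun r => (r - lo) ^ j / INR (fact j)) lo s = (s - lo) ^ S j / INR (fact (S j)).
Proof.
  apply is_RInt_unique.
  replace ((s - lo) ^ S j / INR (fact (S j)))
    with (/ INR (fact j) * ((s - lo) ^ S j / INR (S j)))
    by (rewrite fact_simpl, mult_INR;
        field; split; [apply INR_fact_neq_0 | apply not_0_INR; lia]).
  apply (is_RInt_ext (fun r => / INR (fact j) * (r - lo) ^ j));
    [intros; apply Rmult_comm |].
  apply (is_RInt_scal (V := R_CompleteNormedModule)). rewrite <- RInt_shifted_pow.
  apply (RInt_correct (V := R_CompleteNormedModule)); auto with cont.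
Qed.

Lemma abs_RInt_le_RInt (f g : R -> R) (lo hi : R) :
  lo <= hi -> ex_RInt f lo hi -> ex_RInt g lo hi ->
  (forall x, lo <= x <= hi -> Rabs (f x) <= g x) ->
  Rabs (RInt f lo hi) <= RInt g lo hi.
Proof.
  intros Hle Hf Hg Hfg.
  eapply Rle_trans; [apply abs_RInt_le; assumption |].
  apply RInt_le; auto.
  - apply (ex_RInt_norm f lo hi Hf).
  - intros x Hx; apply Hfg; lra.
Qed.

Lemma pow_div_fact_le (y Y : R) (m : nat) :
  0 <= y <= Y -> y ^ m / INR (fact m) <= Y ^ m.
Proof.
  intros Hy.
  assert (Hf1 : 1 <= INR (fact m)) by (apply (le_INR 1), lt_O_fact).
  apply Rle_trans with (y ^ m); [| apply pow_incr; lra].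
  unfold Rdiv. rewrite <- (Rmult_1_r (y ^ m)) at 2.
  apply Rmult_le_compat_l; [apply pow_le; lra |].
  rewrite <- Rinv_1. apply Rinv_le_contravar; lra.
Qed.

Lemma pow_fact_product_le (x X y Y : R) (m : nat) :
  0 <= x <= X -> 0 <= y <= Y ->
  x ^ m / INR (fact m) * (y ^ m / INR (fact m)) <= (X * Y) ^ m / INR (fact m).
Proof.
  intros Hx Hy. rewrite Rpow_mult_distr.
  unfold Rdiv at 3. rewrite Rmult_assoc.
  apply Rmult_le_compat; [apply Rdiv_le_0_compat; [apply pow_le | apply INR_fact_lt_0]; lra
                         | apply Rdiv_le_0_compat; [apply pow_le | apply INR_fact_lt_0]; lra
                         | apply pow_div_fact_le; lra |].
  apply Rmult_le_compat_r; [left; apply Rinv_0_lt_compat, INR_fact_lt_0 | apply pow_incr; lra].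
Qed.

(** * Iterated integrals *)

Fixpoint iter_RInt (lo : R) (f : R -> R) (j : nat) : R -> R :=
  match j with
  | O => f
  | S j => fun s => RInt (iter_RInt lo f j) lo s
  end.

Lemma iter_RInt_cont (lo : R) (f : R -> R) (j : nat) :
  cont_everywhere f -> cont_everywhere (iter_RInt lo f j).
Proof.
  intros Hf; induction j as [|j IH]; simpl; [exact Hf |].
  intros x. apply (continuous_RInt_1 (V := R_NormedModule) (iter_RInt lo f j) lo x).
  apply filter_forall; intros z.
  apply (RInt_correct (V := R_CompleteNormedModule)). auto with cont.
Qed.

#[local] Hint Resolve iter_RInt_cont : cont.

Lemma iter_RInt_plus (lo : R) (f g : R -> R) (j : nat) (s : R) :
  cont_everywhere f -> cont_everywhere g ->
  iter_RInt lo (fun r => f r + g r) j s = iter_RInt lo f j s + iter_RInt lo g j s.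
Proof.
  intros Hf Hg; revert s; induction j as [|j IH]; intros s; simpl; [reflexivity |].
  rewrite <- RInt_Rplus by auto with cont.
  apply RInt_ext; intros; apply IH.
Qed.

Lemma iter_RInt_scal (lo l : R) (f : R -> R) (j : nat) (s : R) :
  cont_everywhere f ->
  iter_RInt lo (fun r => l * f r) j s = l * iter_RInt lo f j s.
Proof.
  intros Hf; revert s; induction j as [|j IH]; intros s; simpl; [reflexivity |].
  rewrite <- RInt_Rscal by auto with cont.
  apply RInt_ext; intros; apply IH.
Qed.

Lemma iter_RInt_minus (lo : R) (f g : R -> R) (j : nat) (s : R) :
  cont_everywhere f -> cont_everywhere g ->
  iter_RInt lo (fun r => f r - g r) j s = iter_RInt lo f j s - iter_RInt lo g j s.
Proof.
  intros Hf Hg; revert s; induction j as [|j IH]; intros s; simpl; [reflexivity |].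
  rewrite <- RInt_Rminus by auto with cont.
  apply RInt_ext; intros; apply IH.
Qed.

Lemma iter_RInt_shifted_pow (lo : R) (n j : nat) (s : R) :
  iter_RInt lo (fun r => (r - lo) ^ n) j s =
  INR (fact n) / INR (fact (n + j)) * (s - lo) ^ (n + j).
Proof.
  revert s; induction j as [|j IH]; intros s; simpl.
  - rewrite Nat.add_0_r. field. apply INR_fact_neq_0.
  - rewrite (RInt_ext _ (fun r => INR (fact n) / INR (fact (n + j)) * (r - lo) ^ (n + j)))
      by (intros; apply IH).
    rewrite RInt_Rscal, RInt_shifted_pow by auto with cont.
    rewrite Nat.add_succ_r, fact_simpl, mult_INR.
    field. split; [apply INR_fact_neq_0 | apply not_0_INR; lia].
Qed.

Lemma iter_RInt_bound (lo hi e : R) (f : R -> R) (j : nat) (s : R) :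
  cont_everywhere f -> (forall r, lo <= r <= hi -> Rabs (f r) <= e) ->
  lo <= s <= hi ->
  Rabs (iter_RInt lo f j s) <= e * (s - lo) ^ j / INR (fact j).
Proof.
  intros Hf Hb; revert s; induction j as [|j IH]; intros s Hs; cbn [iter_RInt].
  - rewrite pow_O; unfold fact, INR, Rdiv; rewrite Rinv_1, !Rmult_1_r. auto.
  - eapply Rle_trans.
    + apply (abs_RInt_le_RInt _ (fun r => e / INR (fact j) * (r - lo) ^ j));
        [lra | auto with cont | auto with cont |].
      intros r Hr. replace (e / INR (fact j) * (r - lo) ^ j)
        with (e * (r - lo) ^ j / INR (fact j)) by (field; apply INR_fact_neq_0).
      apply IH; lra.
    + rewrite RInt_Rscal, RInt_shifted_pow by auto with cont.
      right. rewrite fact_simpl, mult_INR.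
      field. split; [apply INR_fact_neq_0 | apply not_0_INR; lia].
Qed.

(** * Termwise integration of power series *)

Definition pseries_partial (p : nat -> R) (lo : R) (L : nat) (r : R) : R :=
  sum_f_R0 (fun m => p m * (r - lo) ^ m) L.

Lemma pseries_partial_cont (p : nat -> R) (lo : R) (L : nat) :
  cont_everywhere (pseries_partial p lo L).
Proof. unfold pseries_partial; induction L; cbn [sum_f_R0]; auto with cont. Qed.

#[local] Hint Resolve pseries_partial_cont : cont.

Lemma sum_f_R0_le_of_nonneg (f : nat -> R) (L L' : nat) :
  (forall m, 0 <= f m) -> (L <= L')%nat -> sum_f_R0 f L <= sum_f_R0 f L'.
Proof.
  intros Hf HL; induction HL as [|L' _ IH]; [lra |].
  cbn [sum_f_R0]. specialize (Hf (S L')). lra.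
Qed.

Lemma pseries_partial_bound (p : nat -> R) (lo hi : R) (L : nat) (r : R) :
  lo <= r <= hi ->
  Rabs (pseries_partial p lo L r) <= sum_f_R0 (fun m => Rabs (p m) * (hi - lo) ^ m) L.
Proof.
  intros Hr. eapply Rle_trans; [apply sum_f_R0_triangle |].
  apply sum_Rle; intros m _.
  rewrite Rabs_mult, <- RPow_abs.
  apply Rmult_le_compat_l; [apply Rabs_pos |].
  apply pow_incr. rewrite Rabs_pos_eq; lra.
Qed.

Lemma unif_conv_pseries_center (p : nat -> R) (x0 hi : R) (f : R -> R) :
  x0 <= hi -> unif_conv_pseries p x0 x0 hi f -> f x0 = p 0%nat.
Proof.
  intros Hx Hu.
  assert (Hpart : forall N, sum_f_R0 (fun j => p j * (x0 - x0) ^ j) N = p 0%nat).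
  { induction N as [|N IH]; cbn [sum_f_R0]; [ring |].
    rewrite IH, Rminus_diag, pow_i by lia. ring. }
  destruct (Req_dec (f x0) (p 0%nat)) as [E | E]; [exact E | exfalso].
  assert (Hd : 0 < Rabs (p 0%nat - f x0)) by (apply Rabs_pos_lt; lra).
  destruct (Hu _ Hd) as [N HN]. specialize (HN N (le_n N) x0 ltac:(lra)).
  rewrite Hpart in HN. lra.
Qed.

Lemma unif_conv_pseries_ext (p : nat -> R) (x0 lo hi : R) (f g : R -> R) :
  (forall x, lo <= x <= hi -> f x = g x) ->
  unif_conv_pseries p x0 lo hi f -> unif_conv_pseries p x0 lo hi g.
Proof.
  intros Hfg Hu eps Heps. destruct (Hu eps Heps) as [N HN].
  exists N; intros n Hn x Hx. rewrite <- Hfg by exact Hx. auto.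
Qed.

Definition iter_pseries_term (p : nat -> R) (lo : R) (j : nat) (s : R) (m : nat) : R :=
  p m * (INR (fact m) / INR (fact (m + j))) * (s - lo) ^ (m + j).

Lemma iter_RInt_pseries_partial (p : nat -> R) (lo : R) (L j : nat) (s : R) :
  iter_RInt lo (pseries_partial p lo L) j s = sum_f_R0 (iter_pseries_term p lo j s) L.
Proof.
  unfold iter_pseries_term; induction L as [|L IH]; cbn [sum_f_R0].
  - unfold pseries_partial; cbn [sum_f_R0].
    rewrite iter_RInt_scal, iter_RInt_shifted_pow by auto with cont. ring.
  - change (pseries_partial p lo (S L))
      with (fun r => pseries_partial p lo L r + p (S L) * (r - lo) ^ S L).
    rewrite iter_RInt_plus, IH, iter_RInt_scal, iter_RInt_shifted_pow by auto with cont.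
    ring.
Qed.

Lemma iter_RInt_pseries_approx (p : nat -> R) (lo hi : R) (f : R -> R) :
  cont_everywhere f -> unif_conv_pseries p lo lo hi f ->
  forall eps, 0 < eps -> exists L0, forall L j s, (L0 <= L)%nat -> lo <= s <= hi ->
    Rabs (iter_RInt lo f j s - iter_RInt lo (pseries_partial p lo L) j s)
      <= eps * (s - lo) ^ j / INR (fact j).
Proof.
  intros Hf Hu eps Heps. destruct (Hu eps Heps) as [L0 HL0].
  exists L0; intros L j s HL Hs.
  rewrite <- iter_RInt_minus by auto with cont.
  apply (iter_RInt_bound lo hi); auto with cont.
  intros r Hr. rewrite Rabs_minus_sym. left; apply HL0; auto.
Qed.

Lemma iter_RInt_pseries_approx_bounded (p : nat -> R) (lo hi : R) (f : R -> R) :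
  lo <= hi -> cont_everywhere f -> unif_conv_pseries p lo lo hi f ->
  exists H, 0 <= H /\ forall L j s, lo <= s <= hi ->
    Rabs (iter_RInt lo f j s - iter_RInt lo (pseries_partial p lo L) j s)
      <= H * (s - lo) ^ j / INR (fact j).
Proof.
  intros Hlh Hf Hu.
  destruct (iter_RInt_pseries_approx p lo hi f Hf Hu 1 Rlt_0_1) as [L1 HL1].
  destruct (bounded_continuity (K := R_AbsRing) (V := R_NormedModule) f lo hi)
    as [M HM]; [intros x _; apply Hf |].
  set (S1 := sum_f_R0 (fun m => Rabs (p m) * (hi - lo) ^ m) L1).
  assert (Hterm : forall m, 0 <= Rabs (p m) * (hi - lo) ^ m).
  { intros m. apply Rmult_le_pos; [apply Rabs_pos | apply pow_le; lra]. }
  assert (HS1 : 0 <= S1) by (apply cond_pos_sum; exact Hterm).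
  assert (HM0 : 0 <= M) by (specialize (HM lo ltac:(lra)); pose proof (norm_ge_0 (f lo)); lra).
  exists (1 + M + S1); split; [lra |]; intros L j s Hs.
  assert (Hpow : 0 <= (s - lo) ^ j / INR (fact j)).
  { apply Rdiv_le_0_compat; [apply pow_le; lra | apply INR_fact_lt_0]. }
  destruct (Nat.le_gt_cases L1 L) as [HL | HL].
  - eapply Rle_trans; [apply HL1; auto |].
    unfold Rdiv; rewrite !Rmult_assoc. apply Rmult_le_compat_r; [exact Hpow | lra].
  - rewrite <- iter_RInt_minus by auto with cont.
    eapply Rle_trans; [apply (iter_RInt_bound lo hi (M + S1)); auto with cont |].
    + intros r Hr. eapply Rle_trans; [apply Rabs_triang |]. rewrite Rabs_Ropp.
      apply Rplus_le_compat.
      * left; apply (HM r Hr).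
      * eapply Rle_trans; [apply (pseries_partial_bound p lo hi L r Hr) |].
        apply sum_f_R0_le_of_nonneg; [exact Hterm | lia].
    + unfold Rdiv; rewrite !Rmult_assoc. apply Rmult_le_compat_r; [exact Hpow | lra].
Qed.

Lemma iter_RInt_pseries (p : nat -> R) (lo hi : R) (f : R -> R) (j : nat) (s : R) :
  cont_everywhere f -> unif_conv_pseries p lo lo hi f -> lo <= s <= hi ->
  is_series (iter_pseries_term p lo j s) (iter_RInt lo f j s).
Proof.
  intros Hf Hu Hs. apply is_series_Reals; intros eps Heps.
  set (W := (s - lo) ^ j / INR (fact j)).
  assert (HW : 0 <= W) by (apply Rdiv_le_0_compat; [apply pow_le; lra | apply INR_fact_lt_0]).
  destruct (iter_RInt_pseries_approx p lo hi f Hf Hu (eps / (W + 1)))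
    as [L0 HL0]; [apply Rdiv_lt_0_compat; lra |].
  exists L0; intros L HL. unfold R_dist.
  rewrite <- iter_RInt_pseries_partial, Rabs_minus_sym.
  eapply Rle_lt_trans; [apply HL0; auto |].
  replace (eps / (W + 1) * (s - lo) ^ j / INR (fact j)) with (eps / (W + 1) * W)
    by (unfold W, Rdiv; ring).
  replace (eps / (W + 1) * W) with (eps - eps / (W + 1)) by (field; lra).
  assert (0 < eps / (W + 1)) by (apply Rdiv_lt_0_compat; lra).
  lra.
Qed.

(** * Collecting powers along an edge *)

(* Split the sum before its last L0 + 1 terms: the head is at most E eps by the last
   hypothesis, and the last terms are small because gam tends to 0. *)
Lemma triangular_tannery (gam : nat -> R) (dd : nat -> nat -> R) (E : R) :
  (forall j, 0 <= gam j) -> (forall N, sum_f_R0 gam N <= E) -> Un_cv gam 0 ->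
  (exists H, 0 <= H /\ forall N j, (j <= N)%nat -> Rabs (dd N j) <= gam j * H) ->
  (forall eps, 0 < eps -> exists L0, forall N j, (j <= N)%nat -> (L0 <= N - j)%nat ->
     Rabs (dd N j) <= gam j * eps) ->
  Un_cv (fun N => sum_f_R0 (dd N) N) 0.
Proof.
  intros Hg HE Hcv [H [H0 HH]] Htail eps Heps.
  set (H' := H + 1).
  assert (HH'0 : 0 < H') by (unfold H'; lra).
  assert (HH' : forall N j, (j <= N)%nat -> Rabs (dd N j) <= gam j * H').
  { intros N j Hj. eapply Rle_trans; [apply HH, Hj |].
    apply Rmult_le_compat_l; [apply Hg | unfold H'; lra]. }
  assert (HE0 : 0 <= E) by (specialize (HE 0%nat); specialize (Hg 0%nat); simpl in HE; lra).
  set (e1 := eps / (2 * (E + 1))).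
  destruct (Htail e1) as [L0 HL0]; [unfold e1; apply Rdiv_lt_0_compat; lra |].
  set (e2 := eps / (2 * INR (S L0) * H')).
  assert (HL0pos : 0 < INR (S L0)) by (apply lt_0_INR; lia).
  destruct (Hcv e2) as [J HJ]; [unfold e2; apply Rdiv_lt_0_compat; [lra | nra] |].
  exists (J + S L0)%nat; intros N HN. unfold R_dist; rewrite Rminus_0_r.
  rewrite (tech2 (dd N) (N - S L0) N) by lia.
  replace (N - S (N - S L0))%nat with L0 by lia.
  assert (Hhead : Rabs (sum_f_R0 (dd N) (N - S L0)) <= E * e1).
  { eapply Rle_trans; [apply sum_f_R0_triangle |].
    eapply Rle_trans; [apply (sum_Rle _ (fun j => gam j * e1)); intros j Hj; apply HL0; lia |].
    rewrite <- scal_sum, (Rmult_comm E). apply Rmult_le_compat_l; [| apply HE].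
    unfold e1; apply Rlt_le, Rdiv_lt_0_compat; lra. }
  assert (Htl : Rabs (sum_f_R0 (fun i => dd N (S (N - S L0) + i)%nat) L0)
                <= e2 * H' * INR (S L0)).
  { eapply Rle_trans; [apply sum_f_R0_triangle |].
    rewrite <- sum_cte. apply sum_Rle; intros i Hi.
    eapply Rle_trans; [apply HH'; lia |]. apply Rmult_le_compat_r; [lra |].
    specialize (HJ (S (N - S L0) + i)%nat ltac:(lia)).
    unfold R_dist in HJ; rewrite Rminus_0_r in HJ.
    pose proof (Rle_abs (gam (S (N - S L0) + i)%nat)); lra. }
  assert (E * e1 < eps / 2) by (unfold e1; apply (Rmult_lt_reg_r (2 * (E + 1))); [lra |];
                                field_simplify; lra).
  assert (e2 * H' * INR (S L0) = eps / 2) by (unfold e2; field; lra).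
  eapply Rle_lt_trans; [apply Rabs_triang | lra].
Qed.

Lemma sum_triangle_exchange (g : nat -> nat -> R) (N : nat) :
  sum_f_R0 (fun j => sum_f_R0 (fun m => g j m) (N - j)) N =
  sum_f_R0 (fun n => sum_f_R0 (fun j => g j (n - j)%nat) n) N.
Proof.
  induction N as [|N IH]; [reflexivity |].
  cbn [sum_f_R0]. rewrite <- IH, !Nat.sub_diag.
  rewrite (sum_eq (fun j => sum_f_R0 (fun m => g j m) (S N - j)) 
                  (fun j => sum_f_R0 (fun m => g j m) (N - j) + g j (S N - j)%nat))
    by (intros i Hi; replace (S N - i)%nat with (S (N - i)) by lia; reflexivity).
  rewrite plus_sum. cbn [sum_f_R0]. ring.
Qed.

Lemma coef_fin_pseries_expand (p : nat -> R) (Cc Y lo s : R) (N : nat) :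
  sum_f_R0 (fun n => coef_fin p Cc Y n * (s - lo) ^ n) N =
  sum_f_R0 (fun j => (Cc * Y) ^ j / INR (fact j) *
                     sum_f_R0 (iter_pseries_term p lo j s) (N - j)) N.
Proof.
  transitivity (sum_f_R0 (fun j => sum_f_R0 (fun m => (Cc * Y) ^ j / INR (fact j) *
                                    iter_pseries_term p lo j s m) (N - j)) N).
  2: { apply sum_eq; intros j _. rewrite scal_sum. apply sum_eq; intros; ring. }
  rewrite sum_triangle_exchange. apply sum_eq; intros n _.
  unfold coef_fin. rewrite Rmult_comm, scal_sum, <- sum_f_R0_skip. apply sum_eq; intros j Hj.
  unfold iter_pseries_term.
  replace (n - j + j)%nat with n by lia. replace (n - (n - j))%nat with j by lia.
  field. split; apply INR_fact_neq_0.
Qed.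

Lemma scaled_iter_RInt_bound (z x X e D : R) (j : nat) :
  0 <= x <= X -> 0 <= e -> Rabs D <= e * x ^ j / INR (fact j) ->
  Rabs (z ^ j / INR (fact j) * D) <= (Rabs z * X) ^ j / INR (fact j) * e.
Proof.
  intros Hx He HD.
  rewrite Rabs_mult, Rabs_div, <- RPow_abs, Rpow_mult_distr, (Rabs_pos_eq (INR (fact j)))
    by (pose proof (INR_fact_lt_0 j); lra).
  replace ((Rabs z ^ j * X ^ j) / INR (fact j) * e)
    with (Rabs z ^ j / INR (fact j) * (e * X ^ j)) by (field; apply INR_fact_neq_0).
  apply Rmult_le_compat_l; [apply Rdiv_le_0_compat; [apply pow_le, Rabs_pos | apply INR_fact_lt_0] |].
  eapply Rle_trans; [exact HD |]. unfold Rdiv; rewrite Rmult_assoc.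
  apply Rmult_le_compat_l; [exact He | apply pow_div_fact_le; lra].
Qed.

(* The N-th partial sum is the triangular sum over j <= N of
   (Cc Y)^j/j! (I^j S_(N-j) - I^j f)(s), with S_L the partial sums of the series of f. *)
Lemma coef_fin_pseries_rearrange (p : nat -> R) (lo hi Cc Y : R) (f : R -> R) (s : R) :
  lo <= hi -> cont_everywhere f -> unif_conv_pseries p lo lo hi f -> lo <= s <= hi ->
  is_series (fun n => coef_fin p Cc Y n * (s - lo) ^ n
                      - (Cc * Y) ^ n / INR (fact n) * iter_RInt lo f n s) 0.
Proof.
  intros Hlh Hf Hu Hs. apply is_series_Reals.
  set (rho := Rabs (Cc * Y) * (hi - lo)).
  assert (Hrho : 0 <= rho) by (unfold rho; apply Rmult_le_pos; [apply Rabs_pos | lra]).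
  set (dd := fun N j => (Cc * Y) ^ j / INR (fact j) *
               (iter_RInt lo (pseries_partial p lo (N - j)) j s - iter_RInt lo f j s)).
  apply (Un_cv_ext (fun N => sum_f_R0 (dd N) N)).
  { intros N. rewrite minus_sum, coef_fin_pseries_expand, <- minus_sum.
    apply sum_eq; intros j _. unfold dd. rewrite iter_RInt_pseries_partial. ring. }
  assert (Hdd : forall N j e, 0 <= e ->
     Rabs (iter_RInt lo f j s - iter_RInt lo (pseries_partial p lo (N - j)) j s)
       <= e * (s - lo) ^ j / INR (fact j) ->
     Rabs (dd N j) <= rho ^ j / INR (fact j) * e).
  { intros N j e He HD. apply scaled_iter_RInt_bound with (x := s - lo); [lra | exact He |].
    rewrite Rabs_minus_sym; exact HD. }
  apply (triangular_tannery (fun j => rho ^ j / INR (fact j)) dd (exp rho)).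
  - intros j. apply Rdiv_le_0_compat; [apply pow_le; lra | apply INR_fact_lt_0].
  - intros N. apply exp_ge_taylor, Hrho.
  - apply cv_speed_pow_fact.
  - destruct (iter_RInt_pseries_approx_bounded p lo hi f) as [H [H0 HH]]; auto.
    exists H; split; [exact H0 |]; intros N j _. apply Hdd; auto.
  - intros e He. destruct (iter_RInt_pseries_approx p lo hi f Hf Hu e He) as [L0 HL0].
    exists L0; intros N j _ HL. apply Hdd; [lra | auto].
Qed.

Lemma coef_inf_term_series (q : nat -> R) (lo hi Cc : R) (g : R -> R) (n : nat) :
  lo <= hi -> cont_everywhere g -> unif_conv_pseries q lo lo hi g ->
  is_series (coef_inf_term q Cc (hi - lo) n)
    (Cc ^ n / INR (fact n) * (iter_RInt lo g n hi - q 0%nat * (hi - lo) ^ n / INR (fact n))).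
Proof.
  intros Hlh Hg Hu.
  assert (Htail : is_series (fun i => iter_pseries_term q lo n hi (S i))
                    (iter_RInt lo g n hi - q 0%nat * (hi - lo) ^ n / INR (fact n))).
  { apply is_series_incr_1.
    replace (plus _ _) with (iter_RInt lo g n hi)
      by (unfold plus, iter_pseries_term; simpl; field; apply INR_fact_neq_0).
    apply (iter_RInt_pseries q lo hi); auto; lra. }
  assert (Hterm : forall i, Cc ^ n / INR (fact n) * iter_pseries_term q lo n hi (S i)
                            = coef_inf_term q Cc (hi - lo) n i).
  { intros i. unfold coef_inf_term, iter_pseries_term.
    rewrite (Nat.add_comm n (S i)). field. split; apply INR_fact_neq_0. }
  eapply is_series_ext; [exact Hterm | exact (is_series_scal _ _ _ Htail)].
Qed.

Lemma pseries_of_neumann_trace (p : nat -> R) (lo hi Cc Y v x : R) (f : R -> R) (G : nat -> R) :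
  lo <= hi -> cont_everywhere f -> unif_conv_pseries p lo lo hi f -> lo <= x <= hi ->
  is_series (fun n => Cc ^ n * (Y ^ n / INR (fact n) * iter_RInt lo f n x
                                + (x - lo) ^ n / INR (fact n) * G n)) v ->
  is_series (fun n => (coef_fin p Cc Y n + Cc ^ n / INR (fact n) * G n) * (x - lo) ^ n) v.
Proof.
  intros Hlh Hf Hu Hx Hv.
  pose proof (coef_fin_pseries_rearrange p lo hi Cc Y f x Hlh Hf Hu Hx) as Hre.
  replace v with (plus 0 v) by (unfold plus; simpl; ring).
  assert (Hterm : forall n,
    (coef_fin p Cc Y n * (x - lo) ^ n - (Cc * Y) ^ n / INR (fact n) * iter_RInt lo f n x)
    + Cc ^ n * (Y ^ n / INR (fact n) * iter_RInt lo f n x + (x - lo) ^ n / INR (fact n) * G n)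
    = (coef_fin p Cc Y n + Cc ^ n / INR (fact n) * G n) * (x - lo) ^ n).
  { intros n. rewrite Rpow_mult_distr. field. apply INR_fact_neq_0. }
  eapply is_series_ext; [exact Hterm | exact (is_series_plus _ _ _ _ Hre Hv)].
Qed.

(** * The Goursat problem *)

Definition clamp (lo hi x : R) : R := Rmax lo (Rmin hi x).

Lemma clamp_in (lo hi x : R) : lo <= hi -> lo <= clamp lo hi x <= hi.
Proof. intros; unfold clamp, Rmax, Rmin; repeat destruct Rle_dec; lra. Qed.

Lemma clamp_id (lo hi x : R) : lo <= x <= hi -> clamp lo hi x = x.
Proof. intros; unfold clamp, Rmax, Rmin; repeat destruct Rle_dec; lra. Qed.

Lemma clamp_lipschitz (lo hi x y : R) :
  lo <= hi -> Rabs (clamp lo hi x - clamp lo hi y) <= Rabs (x - y).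
Proof.
  intros; unfold clamp, Rmax, Rmin; repeat destruct Rle_dec;
    unfold Rabs; repeat destruct Rcase_abs; lra.
Qed.

Lemma unif_cont_steps_bound (f : R -> R) (lo hi dl : R) :
  0 < dl ->
  (forall x y, lo <= x <= hi -> lo <= y <= hi -> Rabs (x - y) < dl -> Rabs (f x - f y) <= 1) ->
  forall n x, lo <= x <= hi -> x <= lo + INR n * (dl / 2) -> Rabs (f x - f lo) <= INR n.
Proof.
  intros Hdl Hf n; induction n as [|n IH]; intros x Hx Hn.
  - simpl in *. replace x with lo by lra. rewrite Rminus_diag, Rabs_R0. lra.
  - rewrite S_INR in *.
    destruct (Rle_dec x (lo + INR n * (dl / 2))) as [Hle | Hgt]; [specialize (IH x Hx Hle); lra |].
    destruct (Rle_dec lo (x - dl / 2)) as [Hlo | Hlo].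
    + assert (Hstep : Rabs (f x - f (x - dl / 2)) <= 1).
      { apply Hf; [exact Hx | lra |].
        replace (x - (x - dl / 2)) with (dl / 2) by ring. rewrite Rabs_pos_eq; lra. }
      specialize (IH (x - dl / 2) ltac:(lra) ltac:(lra)).
      replace (f x - f lo) with ((f x - f (x - dl / 2)) + (f (x - dl / 2) - f lo)) by ring.
      eapply Rle_trans; [apply Rabs_triang | lra].
    + assert (Rabs (f x - f lo) <= 1) by (apply Hf; [exact Hx | lra | rewrite Rabs_pos_eq; lra]).
      pose proof (pos_INR n); lra.
Qed.

Lemma unif_cont_bounded (lo hi dl : R) :
  0 < dl -> lo <= hi -> exists M, forall f : R -> R,
  (forall x y, lo <= x <= hi -> lo <= y <= hi -> Rabs (x - y) < dl -> Rabs (f x - f y) <= 1) ->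
  forall x, lo <= x <= hi -> Rabs (f x - f lo) <= M.
Proof.
  intros Hdl Hlh. destruct (INR_unbounded ((hi - lo) / (dl / 2))) as [n Hn].
  assert (Hn' : hi - lo < INR n * (dl / 2)).
  { replace (hi - lo) with ((hi - lo) / (dl / 2) * (dl / 2)) by (field; lra).
    apply Rmult_lt_compat_r; lra. }
  exists (INR n); intros f Hf x Hx. apply (unif_cont_steps_bound f lo hi dl); auto; lra.
Qed.

Section Goursat.

Variables a b c d C : R.
Variables (k : R -> R -> R) (sigma tau : R -> R).
Hypothesis Hab : a < b.
Hypothesis Hcd : c < d.
Hypothesis Hk : cont_on_rect k a b c d.

(* Equal to k on the rectangle and uniformly continuous on the plane, so that all its
   slices are continuous everywhere, as the integration lemmas above require. *)
Definition K (s t : R) : R := k (clamp a b s) (clamp c d t).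

Lemma K_eq (s t : R) : a <= s <= b -> c <= t <= d -> K s t = k s t.
Proof. intros; unfold K; rewrite !clamp_id; auto. Qed.

Lemma K_clamp (s t : R) : K s t = K (clamp a b s) (clamp c d t).
Proof.
  unfold K; rewrite (clamp_id a b (clamp a b s)), (clamp_id c d (clamp c d t));
    auto; apply clamp_in; lra.
Qed.

Lemma K_continuity_2d (x y : R) : continuity_2d_pt K x y.
Proof.
  intros eps.
  destruct (Hk (clamp a b x) (clamp c d y) ltac:(apply clamp_in; lra)
              ltac:(apply clamp_in; lra) eps (cond_pos eps)) as [dl [Hdl H]].
  exists (mkposreal dl Hdl); intros u v Hu Hv; simpl in *.
  apply H; try (apply clamp_in; lra);
    (eapply Rle_lt_trans; [apply clamp_lipschitz; lra | assumption]).
Qed.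

Lemma K_unif_cont (eps : R) : 0 < eps -> exists dl, 0 < dl /\ forall r r' w w',
  Rabs (r' - r) < dl -> Rabs (w' - w) < dl -> Rabs (K r' w' - K r w) < eps.
Proof.
  intros Heps.
  destruct (uniform_continuity_2d K a b c d (fun x y _ _ => K_continuity_2d x y)
              (mkposreal eps Heps)) as [dl H].
  exists dl; split; [apply cond_pos |]; intros r r' w w' Hr Hw.
  rewrite (K_clamp r' w'), (K_clamp r w).
  apply H; try (apply clamp_in; lra);
    (eapply Rle_lt_trans; [apply clamp_lipschitz; lra | assumption]).
Qed.

Lemma K_bounded : exists B, forall r w, Rabs (K r w) <= B.
Proof.
  destruct (K_unif_cont 1 Rlt_0_1) as [dl [Hdl H]].
  destruct (unif_cont_bounded a b dl Hdl ltac:(lra)) as [M1 HM1].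
  destruct (unif_cont_bounded c d dl Hdl ltac:(lra)) as [M2 HM2].
  assert (Hdl0 : Rabs 0 < dl) by (rewrite Rabs_R0; exact Hdl).
  exists (Rabs (K a c) + M2 + M1); intros r w. rewrite K_clamp.
  set (r0 := clamp a b r); set (w0 := clamp c d w).
  assert (Hr : a <= r0 <= b) by (apply clamp_in; lra).
  assert (Hw : c <= w0 <= d) by (apply clamp_in; lra).
  assert (A1 : Rabs (K r0 w0 - K a w0) <= M1).
  { apply (HM1 (fun x => K x w0)); [| exact Hr].
    intros x y _ _ Hxy. left; apply H; [exact Hxy | rewrite Rminus_diag; exact Hdl0]. }
  assert (A2 : Rabs (K a w0 - K a c) <= M2).
  { apply (HM2 (fun y => K a y)); [| exact Hw].
    intros x y _ _ Hxy. left; apply H; [rewrite Rminus_diag; exact Hdl0 | exact Hxy]. }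
  replace (K r0 w0) with ((K r0 w0 - K a w0) + (K a w0 - K a c) + K a c) by ring.
  pose proof (Rabs_triang (K r0 w0 - K a w0 + (K a w0 - K a c)) (K a c)).
  pose proof (Rabs_triang (K r0 w0 - K a w0) (K a w0 - K a c)). lra.
Qed.

Lemma K_cont_l (w : R) : cont_everywhere (fun r => K r w).
Proof.
  intros x; apply continuous_eps_delta; intros eps Heps.
  destruct (K_unif_cont eps Heps) as [dl [Hdl H]].
  exists dl; split; [exact Hdl |]; intros y Hy.
  apply H; [exact Hy | rewrite Rminus_diag, Rabs_R0; exact Hdl].
Qed.

Lemma K_cont_r (r : R) : cont_everywhere (K r).
Proof.
  intros x; apply continuous_eps_delta; intros eps Heps.
  destruct (K_unif_cont eps Heps) as [dl [Hdl H]].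
  exists dl; split; [exact Hdl |]; intros y Hy.
  apply H; [rewrite Rminus_diag, Rabs_R0; exact Hdl | exact Hy].
Qed.

#[local] Hint Resolve K_cont_r : cont.

Lemma K_RInt_cont (t : R) : c <= t -> cont_everywhere (fun r => RInt (fun w => K r w) c t).
Proof.
  intros Ht x; apply continuous_eps_delta; intros eps Heps.
  set (e := eps / (t - c + 1)).
  assert (He : 0 < e) by (apply Rdiv_lt_0_compat; lra).
  destruct (K_unif_cont e He) as [dl [Hdl H]].
  exists dl; split; [exact Hdl |]; intros y Hy.
  rewrite <- RInt_Rminus by auto with cont.
  eapply Rle_lt_trans; [apply abs_RInt_le_const; [exact Ht | auto with cont |] |].
  - intros w _. left; apply H; [exact Hy | rewrite Rminus_diag, Rabs_R0; exact Hdl].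
  - replace eps with (e * (t - c + 1)) by (unfold e; field; lra). nra.
Qed.

Definition sigmaK (s : R) : R := K s c.
Definition tauK (t : R) : R := K a t.
Definition cornerK : R := K a c.

Lemma sigmaK_cont : cont_everywhere sigmaK.
Proof. apply K_cont_l. Qed.

Lemma tauK_cont : cont_everywhere tauK.
Proof. apply K_cont_r. Qed.

#[local] Hint Resolve sigmaK_cont tauK_cont : cont.

Definition volterra (h : R -> R -> R) (s t : R) : R :=
  RInt (fun r => RInt (fun w => h r w) c t) a s.

Definition admissible (h : R -> R -> R) : Prop :=
  (forall r, cont_everywhere (h r)) /\
  (forall t, c <= t -> cont_everywhere (fun r => RInt (fun w => h r w) c t)).

Lemma admissible_K : admissible K.
Proof. split; [exact K_cont_r | exact K_RInt_cont]. Qed.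

Lemma admissible_tensor (f g : R -> R) :
  cont_everywhere f -> cont_everywhere g -> admissible (fun r w => f r * g w).
Proof.
  intros Hf Hg; split; [auto with cont |]; intros t _ x.
  apply (continuous_ext (fun r => f r * RInt g c t));
    [intros r; symmetry; apply RInt_Rscal; auto with cont | auto with cont].
Qed.

Lemma admissible_plus (h1 h2 : R -> R -> R) :
  admissible h1 -> admissible h2 -> admissible (fun r w => h1 r w + h2 r w).
Proof.
  intros [H1 I1] [H2 I2]; split; [auto with cont |]; intros t Ht x.
  apply (continuous_ext (fun r => RInt (fun w => h1 r w) c t + RInt (fun w => h2 r w) c t));
    [intros r; symmetry; apply RInt_Rplus; auto with cont |].
  apply continuous_Rplus; [apply I1 | apply I2]; exact Ht.
Qed.

Lemma admissible_minus (h1 h2 : R -> R -> R) :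
  admissible h1 -> admissible h2 -> admissible (fun r w => h1 r w - h2 r w).
Proof.
  intros [H1 I1] [H2 I2]; split; [auto with cont |]; intros t Ht x.
  apply (continuous_ext (fun r => RInt (fun w => h1 r w) c t - RInt (fun w => h2 r w) c t));
    [intros r; symmetry; apply RInt_Rminus; auto with cont |].
  apply continuous_Rminus; [apply I1 | apply I2]; exact Ht.
Qed.

Lemma admissible_scal (l : R) (h : R -> R -> R) :
  admissible h -> admissible (fun r w => l * h r w).
Proof.
  intros [H I]; split; [auto with cont |]; intros t Ht x.
  apply (continuous_ext (fun r => l * RInt (fun w => h r w) c t));
    [intros r; symmetry; apply RInt_Rscal; auto with cont |].
  apply continuous_Rmult; [apply continuous_Rconst | apply I, Ht].
Qed.

#[local] Hint Resolve admissible_K admissible_tensor admissible_plus admissible_minus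
  admissible_scal : cont.

Lemma admissible_RInt_inner (h : R -> R -> R) (t : R) :
  admissible h -> c <= t -> cont_everywhere (fun r => RInt (fun w => h r w) c t).
Proof. intros [_ I]; exact (I t). Qed.

Lemma admissible_slice (h : R -> R -> R) (r : R) :
  admissible h -> cont_everywhere (fun w => h r w).
Proof. intros [H _]; exact (H r). Qed.

#[local] Hint Resolve admissible_RInt_inner admissible_slice : cont.

Lemma volterra_plus (h1 h2 : R -> R -> R) (s t : R) :
  admissible h1 -> admissible h2 -> c <= t ->
  volterra (fun r w => h1 r w + h2 r w) s t = volterra h1 s t + volterra h2 s t.
Proof.
  intros H1 H2 Ht; unfold volterra.
  rewrite <- RInt_Rplus by auto with cont.
  apply RInt_ext; intros r _; apply RInt_Rplus; auto with cont.
Qed.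

Lemma volterra_minus (h1 h2 : R -> R -> R) (s t : R) :
  admissible h1 -> admissible h2 -> c <= t ->
  volterra (fun r w => h1 r w - h2 r w) s t = volterra h1 s t - volterra h2 s t.
Proof.
  intros H1 H2 Ht; unfold volterra.
  rewrite <- RInt_Rminus by auto with cont.
  apply RInt_ext; intros r _; apply RInt_Rminus; auto with cont.
Qed.

Lemma volterra_scal (l : R) (h : R -> R -> R) (s t : R) :
  admissible h -> c <= t -> volterra (fun r w => l * h r w) s t = l * volterra h s t.
Proof.
  intros H Ht; unfold volterra.
  rewrite <- RInt_Rscal by auto with cont.
  apply RInt_ext; intros r _; apply RInt_Rscal; auto with cont.
Qed.

Lemma volterra_tensor (f g : R -> R) (s t : R) :
  cont_everywhere f -> cont_everywhere g ->
  volterra (fun r w => f r * g w) s t = RInt f a s * RInt g c t.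
Proof.
  intros Hf Hg; unfold volterra.
  rewrite (RInt_ext _ (fun r => RInt g c t * f r))
    by (intros r _; rewrite RInt_Rscal by auto with cont; apply Rmult_comm).
  rewrite RInt_Rscal by auto with cont. apply Rmult_comm.
Qed.

Lemma abs_volterra_le_tensor (h : R -> R -> R) (f g : R -> R) (s t : R) :
  admissible h -> cont_everywhere f -> cont_everywhere g -> a <= s -> c <= t ->
  (forall r w, a <= r <= s -> c <= w <= t -> Rabs (h r w) <= f r * g w) ->
  Rabs (volterra h s t) <= RInt f a s * RInt g c t.
Proof.
  intros Hh Hf Hg Hs Ht Hhfg.
  rewrite <- volterra_tensor by assumption; unfold volterra.
  apply abs_RInt_le_RInt; [exact Hs | auto with cont | |].
  - apply ex_RInt_cont, (admissible_RInt_inner (fun r w => f r * g w)); auto with cont.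
  - intros r Hr. apply abs_RInt_le_RInt; [exact Ht | auto with cont | auto with cont |].
    intros w Hw; apply Hhfg; assumption.
Qed.

(* (C V)^j applied to sigmaK r + tauK w - cornerK: each summand is a product
   f(r) g(w), on which V acts as (int f) (int g). *)
Definition neumann_term (j : nat) (r w : R) : R :=
  C ^ j * (iter_RInt a sigmaK j r * ((w - c) ^ j / INR (fact j))
           + (r - a) ^ j / INR (fact j) * iter_RInt c tauK j w
           - cornerK * ((r - a) ^ j / INR (fact j) * ((w - c) ^ j / INR (fact j)))).

Lemma admissible_neumann_term (j : nat) : admissible (neumann_term j).
Proof.
  unfold neumann_term.
  apply admissible_scal, admissible_minus; [apply admissible_plus | apply admissible_scal];
    apply admissible_tensor; auto with cont.
Qed.

Lemma neumann_term_0 (s t : R) : neumann_term 0 s t = sigmaK s + tauK t - cornerK.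
Proof. unfold neumann_term; simpl; field. Qed.

Lemma volterra_neumann_term (j : nat) (s t : R) :
  c <= t -> C * volterra (neumann_term j) s t = neumann_term (S j) s t.
Proof.
  intros Ht. unfold neumann_term at 1.
  rewrite volterra_scal, volterra_minus, volterra_plus, volterra_scal, !volterra_tensor
    by auto 10 with cont.
  rewrite !RInt_shifted_pow_fact.
  change (RInt (iter_RInt a sigmaK j) a s) with (iter_RInt a sigmaK (S j) s).
  change (RInt (iter_RInt c tauK j) c t) with (iter_RInt c tauK (S j) t).
  unfold neumann_term. change (C ^ S j) with (C * C ^ j). ring.
Qed.

Fixpoint neumann_rem (N : nat) : R -> R -> R :=
  match N with
  | O => K
  | S N => fun r w => neumann_rem N r w - neumann_term N r w
  end.

Lemma admissible_neumann_rem (N : nat) : admissible (neumann_rem N).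
Proof.
  induction N as [|N IH]; [exact admissible_K |].
  apply admissible_minus; [exact IH | apply admissible_neumann_term].
Qed.

Lemma neumann_partial_sum (N : nat) (s t : R) :
  sum_f_R0 (fun j => neumann_term j s t) N = K s t - neumann_rem (S N) s t.
Proof.
  induction N as [|N IH]; cbn [sum_f_R0 neumann_rem] in *; [ring |].
  rewrite IH; ring.
Qed.

Hypothesis Hk_eq : forall s t, a <= s <= b -> c <= t <= d ->
  k s t = sigma s + tau t - sigma a + C * RInt (fun r => RInt (fun w => k r w) c t) a s.
Hypothesis Hcorner : tau c = sigma a.

Lemma k_bottom (s : R) : a <= s <= b -> k s c = sigma s.
Proof.
  intros Hs. rewrite (Hk_eq s c Hs) by lra.
  rewrite (RInt_ext _ (fun _ => 0))
    by (intros; exact (RInt_point (V := R_CompleteNormedModule) c _)).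
  rewrite RInt_const, Hcorner. unfold scal; simpl; unfold mult; simpl. ring.
Qed.

Lemma k_left (t : R) : c <= t <= d -> k a t = tau t.
Proof.
  intros Ht. rewrite (Hk_eq a t) by lra.
  rewrite (RInt_point (V := R_CompleteNormedModule) a). unfold zero; simpl. ring.
Qed.

Lemma sigmaK_eq (s : R) : a <= s <= b -> sigmaK s = sigma s.
Proof. intros Hs; unfold sigmaK; rewrite K_eq by lra; apply k_bottom, Hs. Qed.

Lemma tauK_eq (t : R) : c <= t <= d -> tauK t = tau t.
Proof. intros Ht; unfold tauK; rewrite K_eq by lra; apply k_left, Ht. Qed.

Lemma cornerK_eq : cornerK = sigma a.
Proof. unfold cornerK; rewrite K_eq by lra; apply k_bottom; lra. Qed.

Lemma sigmaK_pseries (p : nat -> R) :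
  unif_conv_pseries p a a b sigma -> unif_conv_pseries p a a b sigmaK.
Proof. apply unif_conv_pseries_ext; intros s Hs; symmetry; apply sigmaK_eq, Hs. Qed.

Lemma tauK_pseries (q : nat -> R) :
  unif_conv_pseries q c c d tau -> unif_conv_pseries q c c d tauK.
Proof. apply unif_conv_pseries_ext; intros t Ht; symmetry; apply tauK_eq, Ht. Qed.

Lemma K_goursat (s t : R) : a <= s <= b -> c <= t <= d ->
  K s t = sigmaK s + tauK t - cornerK + C * volterra K s t.
Proof.
  intros Hs Ht.
  rewrite K_eq, Hk_eq, sigmaK_eq, tauK_eq, cornerK_eq by assumption.
  unfold volterra. do 2 f_equal.
  apply RInt_ext; intros r Hr; rewrite Rmin_left, Rmax_right in Hr by lra.
  apply RInt_ext; intros w Hw; rewrite Rmin_left, Rmax_right in Hw by lra.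
  symmetry; apply K_eq; lra.
Qed.

Lemma neumann_rem_S (N : nat) (s t : R) : a <= s <= b -> c <= t <= d ->
  neumann_rem (S N) s t = C * volterra (neumann_rem N) s t.
Proof.
  intros Hs Ht. induction N as [|N IH].
  - cbn [neumann_rem]. rewrite neumann_term_0, (K_goursat s t Hs Ht). ring.
  - change (neumann_rem (S (S N)) s t) with (neumann_rem (S N) s t - neumann_term (S N) s t).
    change (neumann_rem (S N)) with (fun r w => neumann_rem N r w - neumann_term N r w).
    rewrite volterra_minus, Rmult_minus_distr_l, volterra_neumann_term, <- IH
      by (apply admissible_neumann_rem || apply admissible_neumann_term || lra).
    reflexivity.
Qed.

Lemma neumann_rem_bound (B : R) : (forall r w, Rabs (K r w) <= B) ->
  forall N s t, a <= s <= b -> c <= t <= d ->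
  Rabs (neumann_rem N s t)
    <= B * Rabs C ^ N * ((s - a) ^ N / INR (fact N) * ((t - c) ^ N / INR (fact N))).
Proof.
  intros HB N; induction N as [|N IH]; intros s t Hs Ht.
  - cbn [neumann_rem]. simpl. replace (B * 1 * (1 / 1 * (1 / 1))) with B by field. apply HB.
  - rewrite neumann_rem_S, Rabs_mult by assumption.
    eapply Rle_trans.
    + apply Rmult_le_compat_l; [apply Rabs_pos |].
      apply (abs_volterra_le_tensor _ (fun r => B * Rabs C ^ N * ((r - a) ^ N / INR (fact N)))
               (fun w => (w - c) ^ N / INR (fact N)));
        [apply admissible_neumann_rem | auto with cont | auto with cont | lra | lra |].
      intros r w Hr Hw. rewrite Rmult_assoc. apply IH; lra.
    + rewrite RInt_Rscal, !RInt_shifted_pow_fact by auto with cont.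
      right. change (Rabs C ^ S N) with (Rabs C * Rabs C ^ N). ring.
Qed.

Lemma neumann_series (s t : R) : a <= s <= b -> c <= t <= d ->
  is_series (fun j => neumann_term j s t) (K s t).
Proof.
  intros Hs Ht. destruct K_bounded as [B HB].
  assert (HB0 : 0 <= B) by (specialize (HB a c); pose proof (Rabs_pos (K a c)); lra).
  set (rho := Rabs C * ((b - a) * (d - c))).
  apply is_series_Reals; intros eps Heps.
  destruct (cv_speed_pow_fact rho (eps / (B + 1))) as [N0 HN0];
    [apply Rdiv_lt_0_compat; lra |].
  exists N0; intros N HN. unfold R_dist.
  rewrite neumann_partial_sum.
  replace (K s t - neumann_rem (S N) s t - K s t) with (- neumann_rem (S N) s t) by ring.
  rewrite Rabs_Ropp.
  eapply Rle_lt_trans; [apply (neumann_rem_bound B HB); assumption |].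
  specialize (HN0 (S N) ltac:(lia)). unfold R_dist in HN0; rewrite Rminus_0_r in HN0.
  set (v := rho ^ S N / INR (fact (S N))) in HN0.
  assert (Hv : 0 <= v) by (apply Rdiv_le_0_compat; [apply pow_le; unfold rho;
            apply Rmult_le_pos; [apply Rabs_pos | nra] | apply INR_fact_lt_0]).
  rewrite Rabs_pos_eq in HN0 by exact Hv.
  apply Rle_lt_trans with (B * v).
  - assert (Hv' : B * v = B * Rabs C ^ S N * (((b - a) * (d - c)) ^ S N / INR (fact (S N))))
      by (unfold v, rho; rewrite Rpow_mult_distr; unfold Rdiv; ring).
    rewrite Hv'.
    apply Rmult_le_compat_l; [apply Rmult_le_pos; [lra | apply pow_le, Rabs_pos] |].
    apply pow_fact_product_le; lra.
  - apply Rle_lt_trans with ((B + 1) * v); [nra |].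
    replace eps with ((B + 1) * (eps / (B + 1))) by (field; lra).
    apply Rmult_lt_compat_l; lra.
Qed.

Lemma neumann_term_top (j : nat) (s : R) :
  neumann_term j s d =
  C ^ j * ((d - c) ^ j / INR (fact j) * iter_RInt a sigmaK j s
           + (s - a) ^ j / INR (fact j)
             * (iter_RInt c tauK j d - cornerK * (d - c) ^ j / INR (fact j))).
Proof. unfold neumann_term; field. apply INR_fact_neq_0. Qed.

Lemma neumann_term_right (j : nat) (t : R) :
  neumann_term j b t =
  C ^ j * ((b - a) ^ j / INR (fact j) * iter_RInt c tauK j t
           + (t - c) ^ j / INR (fact j)
             * (iter_RInt a sigmaK j b - cornerK * (b - a) ^ j / INR (fact j))).
Proof. unfold neumann_term; field. apply INR_fact_neq_0. Qed.

End Goursat.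

Theorem mainTheorem1 (a b c d C : R) (p q : nat -> R) (sigma tau : R -> R)
    (k : R -> R -> R) :
  a < b -> c < d -> C <> 0 ->
  p 0%nat = q 0%nat ->
  unif_conv_pseries p a a b sigma ->
  unif_conv_pseries q c c d tau ->
  goursat_solution C a b c d sigma tau k ->
  exists pt qt : nat -> R,
    (forall n : nat,
       is_series (coef_inf_term q C (d - c) n) (pt n - coef_fin p C (d - c) n)) /\
    (forall n : nat,
       is_series (coef_inf_term p C (b - a) n) (qt n - coef_fin q C (b - a) n)) /\
    (forall s : R, a <= s <= b ->
       is_series (fun n => pt n * (s - a) ^ n) (k s d)) /\
    (forall t : R, c <= t <= d ->
       is_series (fun n => qt n * (t - c) ^ n) (k b t)).
Proof.
  intros Hab Hcd _ Hpq Hp Hq [Hk Hk_eq].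
  assert (Hsa : sigma a = p 0%nat) by (apply (unif_conv_pseries_center p a b); [lra | exact Hp]).
  assert (Htc : tau c = q 0%nat) by (apply (unif_conv_pseries_center q c d); [lra | exact Hq]).
  assert (Hcorner : tau c = sigma a) by congruence.
  pose proof (cornerK_eq a b c d C k sigma tau Hab Hcd Hk_eq Hcorner) as Hp0.
  pose proof (sigmaK_pseries a b c d C k sigma tau Hcd Hk_eq Hcorner p Hp) as HsK.
  pose proof (tauK_pseries a b c d C k sigma tau Hab Hk_eq q Hq) as HtK.
  pose proof (sigmaK_cont a b c d k Hab Hcd Hk) as HsKc.
  pose proof (tauK_cont a b c d k Hab Hcd Hk) as HtKc.
  pose proof (neumann_series a b c d C k sigma tau Hab Hcd Hk Hk_eq Hcorner) as Hneu.
  exists (fun n => coef_fin p C (d - c) n + C ^ n / INR (fact n)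
            * (iter_RInt c (tauK a b c d k) n d - q 0%nat * (d - c) ^ n / INR (fact n))),
         (fun n => coef_fin q C (b - a) n + C ^ n / INR (fact n)
            * (iter_RInt a (sigmaK a b c d k) n b - p 0%nat * (b - a) ^ n / INR (fact n))).
  split; [| split; [| split]].
  - intros n; rewrite Rplus_minus_l. apply coef_inf_term_series; auto; lra.
  - intros n; rewrite Rplus_minus_l. apply coef_inf_term_series; auto; lra.
  - intros s Hs. rewrite <- (K_eq a b c d k s d), <- Hpq, <- Hsa, <- Hp0 by (auto; lra).
    apply (pseries_of_neumann_trace p a b C (d - c) _ s (sigmaK a b c d k)); auto; [lra |].
    eapply is_series_ext; [intros n; apply neumann_term_top | apply Hneu; lra].
  - intros t Ht. rewrite <- (K_eq a b c d k b t), <- Hsa, <- Hp0 by (auto; lra).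
    apply (pseries_of_neumann_trace q c d C (b - a) _ t (tauK a b c d k)); auto; [lra |].
    eapply is_series_ext; [intros n; apply neumann_term_right | apply Hneu; lra].
Qed.
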